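(* Let $G$ be an abelian group and let $(a_n)_{n\in\omega}$ be a $T$-sequence in $G$ such that $\{a_n:n\in\omega\}$ generates $G$. Then the coarse group $(G,\mathcal{C}_{\tau(a_n)})$ is asymorphic to the Cayley graph $\mathrm{Cay}(G,\{a_n:n\in\omega\})$ endowed with its path metric.
   Context: A sequence $(a_n)$ in an abelian group $G$ is a $T$-sequence if there is a Hausdorff group topology on $G$ in which $(a_n)\to 0$; $\tau(a_n)$ is the strongest group topology on $G$ in which $(a_n)\to0$, and $\mathcal{C}_{\tau(a_n)}$ is the family of precompact subsets of $(G,\tau(a_n))$. A coarse structure on a set $X$ is a family $\mathcal{E}$ of subsets of $X\times X$, each containing the diagonal, closed under composition, inversion, taking subsets containing the diagonal, and such that every pair $(x,y)$ lies in some member. For $E\in\mathcal{E}$, $E[x]=\{y:(x,y)\in E\}$. A group ideal $\mathcal{I}$ on $G$ (a family of subsets containing all finite sets, closed under subsets and under $(A,B)\mapsto A-B$) defines the coarse structure on $G$ with base $\{\{(x,y):x\in A+y\}:A\in\mathcal{I}\}$; $(G,\mathcal{I})$ denotes $G$ with this coarse structure. A metric space is regarded as a coarse space with base of entourages $\{(x,y):d(x,y)\le r\}$, $r\ge0$. For $S\subseteq G$, $\mathrm{Cay}(G,S)$ is the graph with vertex set $G$ and edges $\{(x,y): x-y\in S\cup(-S)\}$. A map $f$ between coarse spaces $(X,\mathcal{E})$, $(X',\mathcal{E}')$ is macro-uniform if for every $E\in\mathcal{E}$ there is $E'\in\mathcal{E}'$ with $f(E[x])\subseteq E'[f(x)]$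 for all $x$; an asymorphism is a bijection $f$ with $f$ and $f^{-1}$ macro-uniform. *)

From HB Require Import structures.
From mathcomp Require Import all_boot all_order all_algebra.
Set Implicit Arguments. Unset Strict Implicit. Unset Printing Implicit Defensive.
Import GRing.Theory.
Local Open Scope ring_scope.

Section Defs.
Variable G : zmodType.

Definition is_topology (T : (G -> Prop) -> Prop) : Prop :=
  (forall U V : G -> Prop, (forall x, U x <-> V x) -> T U -> T V) /\
  T (fun _ => True) /\
  (forall U V, T U -> T V -> T (fun x => U x /\ V x)) /\
  (forall F : (G -> Prop) -> Prop, (forall U, F U -> T U) ->
     T (fun x => exists U, F U /\ U x)).

Definition is_group_topology (T : (G -> Prop) -> Prop) : Prop :=
  is_topology T /\
  forall (U : G -> Prop) (x y : G), T U -> U (x - y) ->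
    exists V W : G -> Prop, T V /\ T W /\ V x /\ W y /\
      forall v w, V v -> W w -> U (v - w).

Definition hausdorff (T : (G -> Prop) -> Prop) : Prop :=
  forall x y : G, x <> y -> exists U V : G -> Prop,
    T U /\ T V /\ U x /\ V y /\ forall z, U z -> V z -> False.

Definition converges_to_0 (T : (G -> Prop) -> Prop) (a : nat -> G) : Prop :=
  forall U, T U -> U 0 -> exists N, forall n, (N <= n)%N -> U (a n).

Definition T_sequence (a : nat -> G) : Prop :=
  exists T, is_group_topology T /\ hausdorff T /\ converges_to_0 T a.

Definition is_tau (a : nat -> G) (T : (G -> Prop) -> Prop) : Prop :=
  is_group_topology T /\ converges_to_0 T a /\
  forall T', is_group_topology T' -> converges_to_0 T' a ->
    forall U, T' U -> T U.

Definition precompact (T : (G -> Prop) -> Prop) (A : G -> Prop) : Prop :=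
  forall U, T U -> U 0 -> exists F : seq G,
    forall x, A x -> exists f u, f \in F /\ U u /\ x = f + u.

Definition generates (a : nat -> G) : Prop :=
  forall H : G -> Prop, H 0 -> (forall x y, H x -> H y -> H (x - y)) ->
    (forall n, H (a n)) -> forall g, H g.

Definition coarse_str (X : Type) := (X -> X -> Prop) -> Prop.

(* coarse structure of a group ideal I: base {(x,y) : x \in A + y}, A \in I *)
Definition ideal_coarse (I : (G -> Prop) -> Prop) : coarse_str G :=
  fun E => (forall x, E x x) /\
    exists A, I A /\ forall x y, E x y -> exists z, A z /\ x = z + y.

Definition cay_edge (a : nat -> G) (x y : G) : Prop :=
  exists n, x - y = a n \/ x - y = - a n.

(* cay_dist_le a k x y  <->  path distance d(x,y) <= k in Cay(G,{a_n}) *)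
Fixpoint cay_dist_le (a : nat -> G) (k : nat) (x y : G) : Prop :=
  match k with
  | O => x = y
  | S k' => x = y \/ exists z, cay_edge a x z /\ cay_dist_le a k' z y
  end.

(* metric coarse structure of the path metric: base {d <= r}, r >= 0
   (d is integer valued, so r ranges over nat without loss). *)
Definition cayley_coarse (a : nat -> G) : coarse_str G :=
  fun E => (forall x, E x x) /\
    exists r : nat, forall x y, E x y -> cay_dist_le a r x y.

End Defs.

Definition macro_uniform (X Y : Type) (EX : coarse_str X) (EY : coarse_str Y)
  (f : X -> Y) : Prop :=
  forall E, EX E -> exists E', EY E' /\ forall x y, E x y -> E' (f x) (f y).

Definition asymorphic (X Y : Type) (EX : coarse_str X) (EY : coarse_str Y) : Prop :=
  exists (f : X -> Y) (g : Y -> X), cancel f g /\ cancel g f /\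
    macro_uniform EX EY f /\ macro_uniform EY EX g.

(* The asymorphism is the identity of G.  Write ball r for the ball of
   radius r around 0 in the path metric of the Cayley graph; the metric is
   translation invariant, so it suffices to show that a subset of G is
   precompact in tau = tau(a_n) iff it lies in some ball.
   - Balls are precompact (ball_precompact): ball (r + 1) is ball r plus
     {0} u {a_n, -a_n}, and a_n -> 0.
   - Precompact sets are bounded (precompact_bounded).  The balls are closed
     in tau (ball_closed, by the Hausdorff property).  The sets tail_sums k of
     finite sums e_0 + ... + e_m with e_i in {0} u {a_n, -a_n : n >= k_i}
     form a base at 0 of a group topology in which a_n -> 0, hence they are
     tau-neighbourhoods of 0 (tail_interior_nbhd0).  An unbounded set
     contains a separated sequence (separated_sequence); closedness of the
     balls yields one k keeping all its differences out of tail_sums k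
     (avoiding_tail_sums), which contradicts precompactness by pigeonhole. *)

From Stdlib Require Import Classical ClassicalEpsilon.
From HB Require Import structures.
From mathcomp Require Import all_boot all_order all_algebra.
Set Implicit Arguments. Unset Strict Implicit. Unset Printing Implicit Defensive.
Import GRing.Theory.
Local Open Scope ring_scope.

Lemma dependent_choice (X : Type) (P : nat -> X -> Prop) (R : nat -> X -> X -> Prop)
    (x0 : X) :
  P 0%N x0 -> (forall j x, P j x -> exists y, P j.+1 y /\ R j x y) ->
  exists s : nat -> X, forall j, P j (s j) /\ R j (s j) (s j.+1).
Proof.
move=> P0 step.
have [next Hnext] : exists next : nat * X -> X, forall jx,
    P jx.1 jx.2 -> P jx.1.+1 (next jx) /\ R jx.1 jx.2 (next jx).
  apply: (choice (fun jx y => P jx.1 jx.2 -> P jx.1.+1 y /\ R jx.1 jx.2 y)).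
  move=> [j x]; case: (classic (P j x)) => [/step [y Hy]|nPjx]; first by exists y.
  by exists x => /nPjx.
pose fix s j := if j is j'.+1 then next (j', s j') else x0.
have Ps j : P j (s j) by elim: j => [|j IH] //; exact: (Hnext (j, s j) IH).1.
by exists s => j; split; [|exact: (Hnext (j, s j) (Ps j)).2].
Qed.

Lemma seq_pigeonhole (T : eqType) (s : seq T) (f : nat -> T) :
  (forall j, f j \in s) -> exists i j, (i < j)%N /\ f i = f j.
Proof.
move=> fs; pose L := [seq f j | j <- iota 0 (size s).+1].
have /(uniqPn (f 0%N)) [i [j [ij jL]]] : ~~ uniq L.
  apply/negP => /uniq_leq_size sizeL.
  have : (size L <= size s)%N by apply: (sizeL s) => _ /mapP [j _ ->].
  by rewrite size_map size_iota ltnn.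
rewrite size_map size_iota in jL.
rewrite !(nth_map 0%N) ?size_iota ?(ltn_trans ij) // !nth_iota ?(ltn_trans ij) //.
by exists i, j.
Qed.

Section CayleyBalls.
Variables (G : zmodType) (a : nat -> G).

Lemma cay_dist_refl r (x : G) : cay_dist_le a r x x.
Proof. by case: r => [|r] /=; [|left]. Qed.

Lemma cay_dist_mono r s (x y : G) :
  (r <= s)%N -> cay_dist_le a r x y -> cay_dist_le a s x y.
Proof.
elim: r s x => [|r IH] [|s] x //= rs; first by move=> ->; left.
by case=> [->|[z [xz zy]]]; [left|right; exists z; split => //; apply: IH].
Qed.

Lemma cay_dist_trans r s (x y z : G) :
  cay_dist_le a r x y -> cay_dist_le a s y z -> cay_dist_le a (r + s) x z.
Proof.
elim: r x => [|r IH] x; first by move=> /= ->.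
case=> [-> yz|[w [xw wy]] yz]; first by apply: cay_dist_mono yz; rewrite leq_addl.
by rewrite addSn; right; exists w; split => //; apply: IH.
Qed.

Lemma cay_dist_translate r (x y t : G) :
  cay_dist_le a r x y -> cay_dist_le a r (x + t) (y + t).
Proof.
elim: r x => [|r IH] x /=; first by move=> ->.
case=> [->|[w [[n xw] wy]]]; first by left.
right; exists (w + t); split; last exact: IH.
by exists n; rewrite opprD addrA addrAC addrK.
Qed.

Lemma cay_dist_sym r (x y : G) : cay_dist_le a r x y -> cay_dist_le a r y x.
Proof.
elim: r x => [|r IH] x; first by move=> /= ->.
case=> [->|[w [[n xw] wy]]]; first exact: cay_dist_refl.
rewrite -addn1; apply: cay_dist_trans (IH _ wy) _.
right; exists x; split; last by [].
by exists n; rewrite -opprB; case: xw => ->; [right|left; rewrite opprK].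
Qed.

Definition ball (r : nat) (x : G) : Prop := cay_dist_le a r x 0.

Lemma cay_dist_ballE r (x y : G) : cay_dist_le a r x y <-> ball r (x - y).
Proof.
split => [/(cay_dist_translate (- y))|/(cay_dist_translate y)].
  by rewrite subrr.
by rewrite subrK add0r.
Qed.

Lemma ball_add r s (x y : G) : ball r x -> ball s y -> ball (r + s) (x + y).
Proof.
by move=> rx; apply: cay_dist_trans; apply/cay_dist_ballE; rewrite addrK.
Qed.

Lemma ball_opp r (x : G) : ball r x -> ball r (- x).
Proof. by move=> /cay_dist_sym /cay_dist_ballE; rewrite add0r. Qed.

Definition tail_term (k : nat) (e : G) : Prop :=
  e = 0 \/ exists n, (k <= n)%N /\ (e = a n \/ e = - a n).

Lemma tail_term0 k : tail_term k 0.
Proof. by left. Qed.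

Lemma tail_term_opp k e : tail_term k e -> tail_term k (- e).
Proof.
case=> [->|[n [kn [->|->]]]]; first by rewrite oppr0; left.
  by right; exists n; split => //; right.
by right; exists n; split => //; left; rewrite opprK.
Qed.

Lemma tail_term_mono k k' e : (k <= k')%N -> tail_term k' e -> tail_term k e.
Proof.
move=> kk'; case=> [->|[n [k'n en]]]; first by left.
by right; exists n; split => //; apply: leq_trans k'n.
Qed.

Lemma ball_succ r (x : G) :
  ball r.+1 x <-> exists z e, ball r z /\ tail_term 0 e /\ x = z + e.
Proof.
split.
  case=> [->|[z [[n xz] zr]]].
    by exists 0, 0; split; [exact: cay_dist_refl|split; [left|rewrite addr0]].
  exists z, (x - z); split => //; split; last by rewrite addrC subrK.
  by right; exists n.
case=> [z [e [zr [[->|[n [_ en]]] ->]]]].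
  by rewrite addr0; apply: cay_dist_mono zr.
right; exists z; split => //; exists n; by rewrite addrC addKr.
Qed.

Lemma ball_tail_sum k (e : nat -> G) m :
  (forall i, tail_term (k i) (e i)) -> ball m (\sum_(0 <= i < m) e i).
Proof.
move=> ek; elim: m => [|m IH]; first by rewrite big_geq //; exact: cay_dist_refl.
rewrite big_nat_recr //=; apply/ball_succ; exists (\sum_(0 <= i < m) e i), (e m).
by split => //; split => //; apply: tail_term_mono (ek m).
Qed.

Lemma ball_cover : generates a -> forall g, exists r, ball r g.
Proof.
move=> gen; apply: gen.
- by exists 0%N.
- move=> x y [r xr] [s ys]; exists (r + s)%N.
  by apply: ball_add => //; apply: ball_opp.
- move=> n; exists 1%N; apply/ball_succ; exists 0, (a n).
  split; first exact: cay_dist_refl.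
  by split; [right; exists n; split => //; left | rewrite add0r].
Qed.

End CayleyBalls.

Section TauNeighbourhoods.
Variables (G : zmodType) (a : nat -> G) (tau : (G -> Prop) -> Prop).
Hypothesis tau_is_tau : is_tau a tau.

Definition nbhd0 (N : G -> Prop) : Prop := tau N /\ N 0.

Definition absorbs (V : G -> Prop) (k : nat) (U : G -> Prop) : Prop :=
  forall v e, V v -> tail_term a k e -> U (v + e).

Definition avoids (A : G -> Prop) (d : G) (N : G -> Prop) : Prop :=
  forall b n, A b -> N n -> d <> b + n.

Lemma nbhd0_full : nbhd0 (fun _ => True).
Proof. by case: tau_is_tau => [[[_ [tT _]] _] _]. Qed.

Lemma nbhd0_meet U V : nbhd0 U -> nbhd0 V -> nbhd0 (fun x => U x /\ V x).
Proof.
case: tau_is_tau => [[[_ [_ [tI _]]] _] _] [tU U0] [tV V0].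
by split; [apply: tI|].
Qed.

Lemma nbhd0_sub U : nbhd0 U ->
  exists V W, nbhd0 V /\ nbhd0 W /\ forall v w, V v -> W w -> U (v - w).
Proof.
case: tau_is_tau => [[_ cont] _] [tU U0].
have [|V [W [tV [tW [V0 [W0 VW]]]]]] := cont U 0 0 tU; first by rewrite subr0.
by exists V, W.
Qed.

Lemma nbhd0_tail W : nbhd0 W -> exists M, forall e, tail_term a M e -> W e.
Proof.
move=> nW; case: tau_is_tau => _ [conv _].
have [V' [W' [[_ V'0] [[tW' W'0] sub]]]] := nbhd0_sub nW.
have [M1 HM1] := conv W nW.1 nW.2.
have [M2 HM2] := conv W' tW' W'0.
exists (maxn M1 M2) => e [->|[n [Mn [->|->]]]]; first exact: nW.2.
  by apply: HM1; apply: leq_trans Mn; rewrite leq_maxl.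
by rewrite -sub0r; apply: sub => //; apply: HM2; apply: leq_trans Mn; rewrite leq_maxr.
Qed.

Lemma nbhd0_absorb U : nbhd0 U -> exists V k, nbhd0 V /\ absorbs V k U.
Proof.
move=> /nbhd0_sub [V [W [nV [nW sub]]]]; have [M HM] := nbhd0_tail nW.
by exists V, M; split => // v e Vv /tail_term_opp /HM We; rewrite -[e]opprK; apply: sub.
Qed.

Lemma absorbs_sub V k U : absorbs V k U -> forall v, V v -> U v.
Proof. by move=> VU v Vv; rewrite -[v]addr0; apply: VU => //; exact: tail_term0. Qed.

Lemma avoids_finite (T : eqType) (s : seq T) (d : T -> G) (A : G -> Prop) :
  (forall t, t \in s -> exists N, nbhd0 N /\ avoids A (d t) N) ->
  exists N, nbhd0 N /\ forall t, t \in s -> avoids A (d t) N.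
Proof.
elim: s => [|t s IH] H; first by exists (fun _ => True); split => //; exact: nbhd0_full.
have [N1 [nN1 av1]] := H t (mem_head _ _).
have [N2 [nN2 av2]] := IH (fun t' ts => H t' (mem_behead (s := t :: s) ts)).
exists (fun x => N1 x /\ N2 x); split; first exact: nbhd0_meet.
by move=> t'; rewrite in_cons => /orP [/eqP -> | /av2 av] b n Ab [N1n N2n];
  [apply: av1|apply: av].
Qed.

(* tau is Hausdorff, being finer than a Hausdorff group topology in which
   a_n -> 0. *)
Lemma tau_hausdorff : T_sequence a -> hausdorff tau.
Proof.
case=> T [gT [hT cT]] x y xy; case: tau_is_tau => [_ [_ tmax]].
have [U [V [tU [tV UV]]]] := hT x y xy.
by exists U, V; split; [exact: tmax tU|split; [exact: tmax tV|]].
Qed.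

Definition head_terms (M : nat) : seq G :=
  [seq a i | i <- iota 0 M] ++ [seq - a i | i <- iota 0 M].

Lemma tail_term_split M e :
  tail_term a 0 e -> tail_term a M e \/ e \in head_terms M.
Proof.
case=> [->|[n [_ en]]]; first by left; exact: tail_term0.
case: (leqP M n) => [Mn|nM]; first by left; right; exists n.
have n_iota : n \in iota 0 M by rewrite mem_iota.
by right; rewrite mem_cat; case: en => ->; apply/orP; [left|right]; apply: map_f.
Qed.

Lemma head_terms_tail M e : e \in head_terms M -> tail_term a 0 e.
Proof.
by rewrite mem_cat => /orP [] /mapP [i _ ->]; right; exists i; split => //;
  [left|right].
Qed.

(* The Hausdorff property
   gives the radius 0; the inductive step uses ball_succ, the convergence of
   the tails to 0 and finitely many instances of the induction hypothesis. *)
Lemma ball_closed : T_sequence a -> forall r d, ~ ball a r d ->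
  exists N, nbhd0 N /\ avoids (ball a r) d N.
Proof.
move=> Tseq; elim=> [|r IH] d dr.
  have [U [V [tU [tV [Ud [V0 UV]]]]]] := tau_hausdorff Tseq dr.
  by exists V; split => // b n /= -> Vn dn; apply: (UV d) => //; rewrite dn add0r.
have [N0 [nN0 avN0]] := IH d (fun h => dr (cay_dist_mono (leqnSn r) h)).
have [V [M [nV absV]]] := nbhd0_absorb nN0.
have [|NF [nNF avNF]] := @avoids_finite _ (head_terms M) (fun e => d - e) (ball a r).
  move=> e /head_terms_tail e0; apply: IH => de; apply: dr.
  by apply/ball_succ; exists (d - e), e; rewrite subrK.
exists (fun x => V x /\ NF x); split; first exact: nbhd0_meet.
move=> b n /ball_succ [z [e [zr [e0 ->]]]] [Vn NFn].
case: (tail_term_split M e0) => [eM|eh] dzen.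
  by apply: (avN0 z (n + e) zr (absV _ _ Vn eM)); rewrite dzen addrAC addrA.
by apply: (avNF e eh z n zr NFn); rewrite dzen addrAC addrK.
Qed.

(* Balls of the Cayley graph are precompact in tau: ball r.+1 lies in
   ball r + {tail_term 0}, and all but finitely many of the added terms are
   absorbed by a smaller neighbourhood. *)
Lemma ball_precompact r : precompact tau (ball a r).
Proof.
elim: r => [|r IH] U tU U0.
  by exists [:: 0] => x /= ->; exists 0, 0; rewrite mem_head addr0.
have [V [M [[tV V0] absV]]] := nbhd0_absorb (conj tU U0).
have [F HF] := IH V tV V0.
exists [seq f + c | f <- F, c <- 0 :: head_terms M].
move=> x /ball_succ [z [e [zr [e0 ->]]]]; have [f [v [Ff [Vv ->]]]] := HF z zr.
case: (tail_term_split M e0) => [eM|eh].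
  exists (f + 0), (v + e); split; first by apply: allpairs_f => //; exact: mem_head.
  by split; [exact: absV|rewrite addr0 addrA].
exists (f + e), v; split; first by apply: allpairs_f => //; rewrite in_cons eh orbT.
by split; [exact: absorbs_sub absV _ Vv|rewrite addrAC].
Qed.

End TauNeighbourhoods.

Section TailSumTopology.
Variables (G : zmodType) (a : nat -> G).

(* These sets, for k : nat -> nat,
   form a base at 0 of a group topology in which a_n -> 0. *)
Definition tail_sums (k : nat -> nat) (u : G) : Prop :=
  exists m (e : nat -> G),
    (forall i, tail_term a (k i) (e i)) /\ u = \sum_(0 <= i < m) e i.

Lemma tail_sums0 k : tail_sums k 0.
Proof.
exists 0%N, (fun _ => 0); split; [move=> i; exact: tail_term0|by rewrite big_geq].
Qed.

Lemma tail_sums_opp k u : tail_sums k u -> tail_sums k (- u).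
Proof.
case=> m [e [ek ->]]; exists m, (fun i => - e i).
by split; [move=> i; exact: tail_term_opp|rewrite sumrN].
Qed.

Lemma tail_sums_mono k k' u :
  (forall i, (k i <= k' i)%N) -> tail_sums k' u -> tail_sums k u.
Proof.
by move=> kk' [m [e [ek ->]]]; exists m, e; split => // i; apply: tail_term_mono (ek i).
Qed.

Lemma tail_sums_padded k u : tail_sums k u -> exists m (e : nat -> G),
  (forall i, tail_term a (k i) (e i)) /\
  forall M, (m <= M)%N -> u = \sum_(0 <= i < M) e i.
Proof.
case=> m [e [ek ->]]; exists m, (fun i => if (i < m)%N then e i else 0).
split=> [i|M mM]; first by case: ifP => _; [exact: ek|exact: tail_term0].
rewrite (big_cat_nat (leq0n m) mM) /= [X in _ = _ + X]big1_seq ?addr0.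
  by apply: eq_big_nat => i /andP [_ ->].
by move=> i /andP [_]; rewrite mem_index_iota => /andP [/leq_gtF ->].
Qed.

Lemma sum_pairs (f : nat -> G) M :
  \sum_(0 <= i < M.*2) f i = \sum_(0 <= i < M) (f i.*2 + f i.*2.+1).
Proof.
elim: M => [|M IH]; first by rewrite !big_geq.
by rewrite doubleS !big_nat_recr //= IH addrA.
Qed.

(* Interleaving two tail sums shows that tail_sums k' - tail_sums k' is
   contained in tail_sums k for a suitable k'. *)
Lemma tail_sums_sub k : exists k', forall u v,
  tail_sums k' u -> tail_sums k' v -> tail_sums k (u - v).
Proof.
exists (fun i => maxn (k i.*2) (k i.*2.+1)) => u v /tail_sums_padded [m [e [ek Eu]]].
move=> /tail_sums_padded [m' [e' [ek' Ev]]].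
exists (m + m').*2%N, (fun i => if odd i then - e' i./2 else e i./2); split.
  move=> i; rewrite -[in k i](odd_double_half i); case: (odd i) => /=.
    by apply: tail_term_opp; apply: tail_term_mono (ek' _); rewrite leq_maxr.
  by apply: tail_term_mono (ek _); rewrite leq_maxl.
rewrite sum_pairs (Eu (m + m')%N (leq_addr _ _)) (Ev (m + m')%N (leq_addl _ _)).
rewrite -sumrB; apply: eq_big_nat => i _.
by rewrite /= odd_double /= doubleK uphalf_double.
Qed.

Lemma tail_sums_add k : exists k', forall u v,
  tail_sums k' u -> tail_sums k' v -> tail_sums k (u + v).
Proof.
have [k' Hk'] := tail_sums_sub k; exists k' => u v ku kv.
by rewrite -[v]opprK; apply: Hk' => //; apply: tail_sums_opp.
Qed.

Definition tail_open (O : G -> Prop) : Prop :=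
  forall x, O x -> exists k, forall u, tail_sums k u -> O (x + u).

Definition tail_interior (P : G -> Prop) (v : G) : Prop :=
  exists k, forall u, tail_sums k u -> P (v + u).

Lemma tail_interior_open P : tail_open (tail_interior P).
Proof.
move=> v [k Hk]; have [k' Hk'] := tail_sums_add k; exists k' => u ku.
by exists k' => w kw; rewrite -addrA; apply: Hk; apply: Hk'.
Qed.

Lemma tail_interior_sub P v : tail_interior P v -> P v.
Proof. by case=> k Hk; rewrite -[v]addr0; apply: Hk; exact: tail_sums0. Qed.

Lemma tail_is_topology : is_topology tail_open.
Proof.
split; first by move=> U V UV HU x /UV /HU [k Hk]; exists k => u /Hk /UV.
split; first by move=> x _; exists (fun _ => 0%N).
split=> [U V HU HV x [/HU [k1 H1] /HV [k2 H2]]|F HF x [U [FU Ux]]].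
  exists (fun i => maxn (k1 i) (k2 i)) => u ku; split.
    by apply: H1; apply: tail_sums_mono ku => i; rewrite leq_maxl.
  by apply: H2; apply: tail_sums_mono ku => i; rewrite leq_maxr.
have [k Hk] := HF U FU x Ux.
by exists k => u ku; exists U; split => //; apply: Hk.
Qed.

Lemma tail_is_group_topology : is_group_topology tail_open.
Proof.
split=> [|O x y HO Oxy]; first exact: tail_is_topology.
have [k Hk] := HO _ Oxy; have [k' Hk'] := tail_sums_sub k.
exists (tail_interior (fun v => tail_sums k' (v - x))).
exists (tail_interior (fun w => tail_sums k' (w - y))).
split; first exact: tail_interior_open.
split; first exact: tail_interior_open.
split; first by exists k' => u ku; rewrite addrAC subrr add0r.
split; first by exists k' => u ku; rewrite addrAC subrr add0r.
move=> v w /tail_interior_sub vx /tail_interior_sub wy.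
have -> : v - w = x - y + (v - x - (w - y)).
  by rewrite addrACA [x + _]addrC subrK opprB addKr.
by apply: Hk; apply: Hk'.
Qed.

(* a_n -> 0 in the tail-sum topology: a_n is a one-term tail sum. *)
Lemma tail_converges : converges_to_0 tail_open a.
Proof.
move=> O HO O0; have [k Hk] := HO 0 O0; exists (k 0%N) => n kn.
rewrite -[a n]add0r; apply: Hk; exists 1%N, (fun i => if i == 0%N then a n else 0).
split; last by rewrite big_nat1.
by case=> [|i] /=; [right; exists n; split => //; left|exact: tail_term0].
Qed.

End TailSumTopology.

(* Since tau(a_n) is finer than the tail-sum topology, the tail-sum interior
   of every tail_sums k is a tau-neighbourhood of 0. *)
Lemma tail_interior_nbhd0 (G : zmodType) (a : nat -> G) tau k :
  is_tau a tau -> nbhd0 tau (tail_interior a (tail_sums a k)).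
Proof.
case=> _ [_ tmax]; split.
  by apply: tmax; [exact: tail_is_group_topology|exact: tail_converges|
    exact: tail_interior_open].
by exists k => u ku; rewrite add0r.
Qed.

Section PrecompactBounded.
Variables (G : zmodType) (a : nat -> G) (tau : (G -> Prop) -> Prop).
Hypothesis tau_is_tau : is_tau a tau.
Hypothesis a_T_sequence : T_sequence a.
Hypothesis a_generates : generates a.

Definition bounded (A : G -> Prop) : Prop := exists r, forall z, A z -> ball a r z.

Lemma separated_sequence A : ~ bounded A -> exists x : nat -> G,
  (forall j, A (x j)) /\ forall j' j, (j' < j)%N -> ~ ball a j.+1 (x j - x j').
Proof.
move=> unbounded.
have far r : exists z, A z /\ ~ ball a r z.
  apply: NNPP => nfar; apply: unbounded; exists r => z Az.
  by apply: NNPP => zr; apply: nfar; exists z.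
(* The state (x_j, R_j) records a radius R_j bounding x_0, ..., x_(j-1). *)
pose P j (p : G * nat) := A p.1 /\ ~ ball a (p.2 + j.+1) p.1.
pose R (j : nat) (p q : G * nat) := (p.2 <= q.2)%N /\ ball a q.2 p.1.
have [x0 x0far] := far 1%N.
have [|s Hs] := @dependent_choice _ P R (x0, 0%N) x0far.
  move=> j [x r] _; have [rx xrx] := ball_cover a_generates x.
  have [y [Ay yfar]] := far (maxn r rx + j.+2)%N.
  exists (y, maxn r rx); split=> //; split; first exact: leq_maxl.
  by apply: cay_dist_mono xrx; exact: leq_maxr.
exists (fun j => (s j).1); split=> [j|j' j jj]; first by case: (Hs j) => [[]].
have radius_mono : {homo (fun j => (s j).2) : m n / (m <= n)%N}.
  by apply: homo_leq => [//|m n p|i]; [exact: leq_trans|case: (Hs i) => _ []].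
have xj'_ball : ball a (s j).2 (s j').1.
  by case: (Hs j') => _ [_ xr]; apply: cay_dist_mono xr; exact: radius_mono.
move=> /(ball_add xj'_ball); rewrite addrC subrK.
by case: (Hs j) => -[].
Qed.

Lemma nested_nbhds (d : nat -> nat -> G) :
  (forall j' j, (j' < j)%N -> ~ ball a j.+1 (d j j')) ->
  exists (N : nat -> G -> Prop) (k : nat -> nat),
    [/\ forall j, nbhd0 tau (N j),
        forall j, absorbs a (N j.+1) (k j) (N j) &
        forall j' j, (j' < j)%N -> avoids (ball a j.+1) (d j j') (N j.+1)].
Proof.
move=> dfar.
pose R j (N N' : G -> Prop) := (exists k, absorbs a N' k N) /\
  forall j', j' \in iota 0 j -> avoids (ball a j.+1) (d j j') N'.
have [|N HN] := @dependent_choice _ (fun _ => nbhd0 tau) R _ (nbhd0_full tau_is_tau).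
  move=> j U nU; have [V [k [nV VU]]] := nbhd0_absorb tau_is_tau nU.
  have [|NF [nNF avNF]] := @avoids_finite _ _ _ tau_is_tau _ (iota 0 j) (d j) (ball a j.+1).
    move=> j'; rewrite mem_iota add0n => /andP [_ jj].
    exact: (ball_closed tau_is_tau a_T_sequence (dfar j' j jj)).
  exists (fun x => V x /\ NF x); split; first exact: (nbhd0_meet tau_is_tau nV nNF).
  split; first by exists k => v e [Vv _]; apply: VU.
  by move=> j' /avNF av b n Ab [_ NFn]; apply: av.
have [k Hk] := choice (fun j k => absorbs a (N j.+1) k (N j)) (fun j => (HN j).2.1).
exists N, k; split=> [j|//|j' j jj]; first by case: (HN j).
by case: (HN j) => _ [_ av]; apply: av; rewrite mem_iota add0n jj.
Qed.

Lemma nested_tail_segment (N : nat -> G -> Prop) (k : nat -> nat) (e : nat -> G) :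
  (forall j, N j 0) -> (forall j, absorbs a (N j.+1) (k j) (N j)) ->
  (forall i, tail_term a (k i) (e i)) ->
  forall m p, N p (\sum_(p <= i < p + m) e i).
Proof.
move=> N0 absN ek; elim=> [|m IH] p; first by rewrite addn0 big_geq.
rewrite big_ltn; last by rewrite addnS ltnS leq_addr.
by rewrite -addSnnS addrC; apply: absN; [exact: IH|exact: ek].
Qed.

(* Points outside ball (j + 1) can simultaneously be kept out of a single
   basic neighbourhood tail_sums k: a tail sum splits into its first j + 1
   terms (in ball (j + 1)) and a remainder (in N_(j+1)). *)
Lemma avoiding_tail_sums (d : nat -> nat -> G) :
  (forall j' j, (j' < j)%N -> ~ ball a j.+1 (d j j')) ->
  exists k, forall j' j, (j' < j)%N -> ~ tail_sums a k (d j j').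
Proof.
move=> /nested_nbhds [N [k [nN absN avN]]]; exists k.
move=> j' j jj /tail_sums_padded [m [e [ek sum_e]]].
have := sum_e (j.+1 + m)%N (leq_addl _ _).
rewrite (big_cat_nat (leq0n j.+1) (leq_addr _ _)) /=.
apply: (avN j' j jj _ _ (ball_tail_sum j.+1 ek)).
by apply: (nested_tail_segment _ absN ek) => i; case: (nN i).
Qed.

(* Otherwise it contains a separated
   sequence (x_j); choose k keeping every x_j - x_j' (j' < j) out of
   tail_sums k and k' with tail_sums k' - tail_sums k' inside tail_sums k.
   Covering the set by finitely many translates of the tau-neighbourhood
   tail_interior (tail_sums k') puts two terms x_i, x_j in the same
   translate, whence x_j - x_i lies in tail_sums k. *)
Lemma precompact_bounded A : precompact tau A -> bounded A.
Proof.
move=> preA; apply: NNPP => /separated_sequence [x [Ax xsep]].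
have [k kavoid] := avoiding_tail_sums xsep.
have [k' k'sub] := tail_sums_sub a k.
have [tO O0] := tail_interior_nbhd0 k' tau_is_tau.
have [F HF] := preA _ tO O0.
have [c Hc] : exists c : nat -> G * G, forall j,
    [/\ (c j).1 \in F, tail_interior a (tail_sums a k') (c j).2 & x j = (c j).1 + (c j).2].
  apply: (choice (fun j (p : G * G) =>
    [/\ p.1 \in F, tail_interior a (tail_sums a k') p.2 & x j = p.1 + p.2])) => j.
  by have [f [u [Ff [Ou xfu]]]] := HF _ (Ax j); exists (f, u).
have cF j : (c j).1 \in F by case: (Hc j).
have [i [j [ij cij]]] := seq_pigeonhole cF.
apply: (kavoid i j ij).
case: (Hc i) (Hc j) => _ /tail_interior_sub ui -> [_ /tail_interior_sub uj ->].
by rewrite cij opprD addrACA subrr add0r; apply: k'sub.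
Qed.
End PrecompactBounded.

(* The identity map is an asymorphism: entourages of the precompact ideal are
   contained in {(x, y) : x - y in A} for a precompact, hence bounded, A,
   and metric entourages {d <= r} are those given by the precompact ball. *)
Theorem theorem2 (G : zmodType) (a : nat -> G) (tau : (G -> Prop) -> Prop) :
  T_sequence a -> generates a -> is_tau a tau ->
  asymorphic (ideal_coarse (precompact tau)) (cayley_coarse a).
Proof.
move=> Tseq gen tau_is_tau; exists id, id; do 2!split => //; split.
  move=> E [_ [A [preA EA]]].
  have [r Ar] := precompact_bounded tau_is_tau Tseq gen preA.
  exists (cay_dist_le a r); split; first by split; [exact: cay_dist_refl|exists r].
  by move=> x y /EA [z [Az ->]]; apply/cay_dist_ballE; rewrite addrK; exact: Ar.
move=> E [_ [r Er]]; exists (cay_dist_le a r); split; last by [].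
split; first exact: cay_dist_refl.
exists (ball a r); split; first exact: ball_precompact.
by move=> x y /cay_dist_ballE xy; exists (x - y); rewrite subrK.
Qed.
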